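(* Let $\delta,\gamma\in\mathbb R$. For any pair of points $(\xi,\eta),(z_1,z_2)\in(0,\infty)\times\mathbb R$ there exists a smooth control $u:[0,1]\to\mathbb R$ such that the system \[ \tfrac{d}{dt}z_1(t)=-z_1(t)^4z_2(t),\qquad \tfrac{d}{dt}z_2(t)=\delta z_1(t)+2z_1(t)^3z_2(t)^2-\gamma z_1(t)^4z_2(t)+u(t) \] has a solution on $[0,1]$ with $z_1(0)=\xi$, $z_2(0)=\eta$, $z_1(1)=z_1$, $z_2(1)=z_2$ and $z_1(t)>0$ for all $t\in[0,1]$. *)

From Stdlib Require Import Reals.
Open Scope R_scope.

Fixpoint Cn (n : nat) (f : R -> R) : Prop :=
  match n with
  | O => continuity f
  | S m => exists f' : R -> R,
             (forall x, derivable_pt_lim f x (f' x)) /\ Cn m f'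
  end.

Definition smooth (f : R -> R) : Prop := forall n, Cn n f.

(* Flatness: [z1] is a flat output.  Writing [z1 = exp p], the first equation
   forces [z2 = - p' exp (-3 p)], and the second equation then determines [u]
   from [p, p', p''].  So it suffices to choose a smooth [p] with prescribed
   values and slopes at [0] and [1]; a cubic Hermite interpolant does, and
   [z1 = exp p] is automatically positive. *)

From Stdlib Require Import Reals Lra FunctionalExtensionality.
From Coquelicot Require Import Coquelicot.
Open Scope R_scope.

Lemma Cn_pred n f : Cn (S n) f -> Cn n f.
Proof.
  revert f; induction n as [|n IH]; intros f [f' [Hd Hc]].
  - intro x. apply derivable_continuous_pt. exists (f' x). apply Hd.
  - exists f'. split; [exact Hd | exact (IH _ Hc)].
Qed.

Lemma Cn_const n c : Cn n (fun _ => c).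
Proof.
  revert c; induction n as [|n IH]; intro c.
  - intro x. apply continuity_const. intros a b; reflexivity.
  - exists (fun _ => 0). split; [intro x; apply derivable_pt_lim_const | apply IH].
Qed.

Lemma Cn_plus n f g : Cn n f -> Cn n g -> Cn n (fun x => f x + g x).
Proof.
  revert f g; induction n as [|n IH]; intros f g Hf Hg.
  - exact (continuity_plus f g Hf Hg).
  - destruct Hf as [f' [Hfd Hfc]], Hg as [g' [Hgd Hgc]].
    exists (fun x => f' x + g' x). split.
    + intro x. apply (derivable_pt_lim_plus f g); auto.
    + apply IH; auto.
Qed.

Lemma Cn_mult n f g : Cn n f -> Cn n g -> Cn n (fun x => f x * g x).
Proof.
  revert f g; induction n as [|n IH]; intros f g Hf Hg.
  - exact (continuity_mult f g Hf Hg).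
  - pose proof (Cn_pred _ _ Hf) as Hf0; pose proof (Cn_pred _ _ Hg) as Hg0.
    destruct Hf as [f' [Hfd Hfc]], Hg as [g' [Hgd Hgc]].
    exists (fun x => f' x * g x + f x * g' x). split.
    + intro x. apply (derivable_pt_lim_mult f g); auto.
    + apply Cn_plus; apply IH; auto.
Qed.

Lemma Cn_exp n f : Cn n f -> Cn n (fun x => exp (f x)).
Proof.
  revert f; induction n as [|n IH]; intros f Hf.
  - intro x. apply (continuity_pt_comp f exp); [apply Hf |].
    apply derivable_continuous_pt, derivable_pt_exp.
  - pose proof (Cn_pred _ _ Hf) as Hf0.
    destruct Hf as [f' [Hfd Hfc]].
    exists (fun x => f' x * exp (f x)). split.
    + intro x. rewrite Rmult_comm.
      apply (derivable_pt_lim_comp f exp); [apply Hfd | apply derivable_pt_lim_exp].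
    + apply Cn_mult; auto.
Qed.

Lemma smooth_const c : smooth (fun _ => c).
Proof. intro n; apply Cn_const. Qed.

Lemma smooth_plus f g : smooth f -> smooth g -> smooth (fun x => f x + g x).
Proof. intros Hf Hg n; apply Cn_plus; auto. Qed.

Lemma smooth_mult f g : smooth f -> smooth g -> smooth (fun x => f x * g x).
Proof. intros Hf Hg n; apply Cn_mult; auto. Qed.

Lemma smooth_minus f g : smooth f -> smooth g -> smooth (fun x => f x - g x).
Proof.
  intros Hf Hg.
  replace (fun x => f x - g x) with (fun x => f x + -1 * g x)
    by (apply functional_extensionality; intro; ring).
  apply smooth_plus, smooth_mult; auto using smooth_const.
Qed.

Lemma smooth_exp f : smooth f -> smooth (fun x => exp (f x)).
Proof. intros Hf n; apply Cn_exp; auto. Qed.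

Lemma smooth_of_derivative f f' :
  (forall x, derivable_pt_lim f x (f' x)) -> smooth f' -> smooth f.
Proof. intros Hd Hs n. apply Cn_pred. exists f'. auto. Qed.

Lemma cubic_hermite (v0 v1 s0 s1 : R) :
  exists p p1 p2 : R -> R,
    (forall t, derivable_pt_lim p t (p1 t)) /\
    (forall t, derivable_pt_lim p1 t (p2 t)) /\ smooth p2 /\
    p 0 = v0 /\ p 1 = v1 /\ p1 0 = s0 /\ p1 1 = s1.
Proof.
  set (c := 3 * (v1 - v0) - 2 * s0 - s1).
  set (d := s0 + s1 - 2 * (v1 - v0)).
  exists (fun t => v0 + s0 * t + c * t ^ 2 + d * t ^ 3),
         (fun t => s0 + 2 * c * t + 3 * d * t ^ 2),
         (fun t => 2 * c + 6 * d * t).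
  split; [| split; [| split]].
  - intro t. apply is_derive_Reals. auto_derive; [exact I | ring].
  - intro t. apply is_derive_Reals. auto_derive; [exact I | ring].
  - apply (smooth_of_derivative _ (fun _ => 6 * d)); [| apply smooth_const].
    intro t. apply is_derive_Reals. auto_derive; [exact I | ring].
  - unfold c, d. repeat split; ring.
Qed.

Lemma exp_mul_neg3 x : exp (-3 * x) = / exp x ^ 3.
Proof.
  replace (-3 * x) with (- (x + x + x)) by ring.
  rewrite exp_Ropp, !exp_plus. simpl. f_equal. ring.
Qed.

Section FlatOutput.

Variables (delta gamma : R) (p p1 p2 : R -> R).
Hypothesis derive_p : forall t, derivable_pt_lim p t (p1 t).
Hypothesis derive_p1 : forall t, derivable_pt_lim p1 t (p2 t).

Definition flat_z1 t := exp (p t).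
Definition flat_z2 t := - p1 t * exp (-3 * p t).
Definition flat_control t :=
  (p1 t * p1 t - p2 t) * exp (-3 * p t) - (delta + gamma * p1 t) * exp (p t).

Lemma flat_z1_derive t :
  derivable_pt_lim flat_z1 t (- (flat_z1 t ^ 4 * flat_z2 t)).
Proof.
  unfold flat_z1, flat_z2.
  replace (- (exp (p t) ^ 4 * (- p1 t * exp (-3 * p t)))) with (exp (p t) * p1 t).
  - apply (derivable_pt_lim_comp p exp); [apply derive_p | apply derivable_pt_lim_exp].
  - rewrite exp_mul_neg3. field. apply Rgt_not_eq, exp_pos.
Qed.

Lemma flat_z2_derive t :
  derivable_pt_lim flat_z2 t
    (delta * flat_z1 t + 2 * flat_z1 t ^ 3 * flat_z2 t ^ 2
     - gamma * flat_z1 t ^ 4 * flat_z2 t + flat_control t).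
Proof.
  pose proof (exp_pos (p t)).
  assert (D3p : derivable_pt_lim (fun s => -3 * p s) t (-3 * p1 t)).
  { replace (-3 * p1 t) with (0 * p t + -3 * p1 t) by ring.
    apply (derivable_pt_lim_mult (fun _ => -3) p);
      [apply derivable_pt_lim_const | apply derive_p]. }
  assert (DE : derivable_pt_lim (fun s => exp (-3 * p s)) t
                 (exp (-3 * p t) * (-3 * p1 t))).
  { apply (derivable_pt_lim_comp (fun s => -3 * p s) exp);
      [exact D3p | apply derivable_pt_lim_exp]. }
  pose proof (derivable_pt_lim_mult (fun s => - p1 s) (fun s => exp (-3 * p s)) t _ _
                (derivable_pt_lim_opp p1 t _ (derive_p1 t)) DE) as DM.
  unfold flat_z1, flat_z2, flat_control.
  match goal with |- derivable_pt_lim _ _ ?L => replace L with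
    (- p2 t * exp (-3 * p t) + - p1 t * (exp (-3 * p t) * (-3 * p1 t))) end.
  - exact DM.
  - rewrite !exp_mul_neg3. field. lra.
Qed.

Lemma smooth_flat_control :
  smooth p -> smooth p1 -> smooth p2 -> smooth flat_control.
Proof.
  intros Sp Sp1 Sp2. unfold flat_control.
  apply smooth_minus; apply smooth_mult.
  - apply smooth_minus; [apply smooth_mult |]; auto.
  - apply smooth_exp, smooth_mult; auto using smooth_const.
  - apply smooth_plus, smooth_mult; auto using smooth_const.
  - apply smooth_exp; auto.
Qed.

End FlatOutput.

Theorem lemma4 (delta gamma xi eta zf1 zf2 : R) (hxi : 0 < xi) (hz : 0 < zf1) :
  exists u : R -> R, smooth u /\
  exists z1 z2 : R -> R,
    (forall t, 0 <= t <= 1 ->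
       derivable_pt_lim z1 t (- (z1 t ^ 4 * z2 t)) /\
       derivable_pt_lim z2 t
         (delta * z1 t + 2 * z1 t ^ 3 * z2 t ^ 2 - gamma * z1 t ^ 4 * z2 t + u t)) /\
    z1 0 = xi /\ z2 0 = eta /\ z1 1 = zf1 /\ z2 1 = zf2 /\
    (forall t, 0 <= t <= 1 -> 0 < z1 t).
Proof.
  destruct (cubic_hermite (ln xi) (ln zf1) (- (xi ^ 3 * eta)) (- (zf1 ^ 3 * zf2)))
    as (p & p1 & p2 & Dp & Dp1 & Sp2 & P0 & P1 & Q0 & Q1).
  assert (Sp1 : smooth p1) by exact (smooth_of_derivative _ _ Dp1 Sp2).
  assert (Sp : smooth p) by exact (smooth_of_derivative _ _ Dp Sp1).
  exists (flat_control delta gamma p p1 p2).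
  split; [exact (smooth_flat_control _ _ _ _ _ Sp Sp1 Sp2) |].
  exists (flat_z1 p), (flat_z2 p p1).
  split; [| split; [| split; [| split; [| split]]]].
  - intros t _. split; [apply flat_z1_derive | apply flat_z2_derive]; auto.
  - unfold flat_z1. rewrite P0. apply exp_ln. exact hxi.
  - unfold flat_z2. rewrite exp_mul_neg3, P0, Q0, exp_ln by exact hxi. field. lra.
  - unfold flat_z1. rewrite P1. apply exp_ln. exact hz.
  - unfold flat_z2. rewrite exp_mul_neg3, P1, Q1, exp_ln by exact hz. field. lra.
  - intros t _. apply exp_pos.
Qed.
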